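(* Let $f,g$ be complex-valued functions of two variables with $f\perp g$ and $g(x,y)=-g(y,x)$ for all $x,y$. Let $\{a_i\}_{i\in\mathbb{Z}},\{b_i\}_{i\in\mathbb{Z}}$ be sequences and $m\ge0$, $n\ge1$ integers such that all quantities $f(a_j,b_m)$, $g(b_j,b_m)$ ($j\ne m$), $f(a_j,b_{-n})$ and $g(b_j,b_{-n})$ ($j\neq -n$) with $-n\le j\le m$ are nonzero. Then $$\sum_{k=-n}^{m}f(a_k,b_k)\frac{\prod_{j=m}^{k-1}g(b_j,b_m)}{\prod_{j=m}^{k}f(a_j,b_m)}\frac{\prod_{j=1}^{k-1}f(a_j,b_{-n})}{\prod_{j=1}^{k}g(b_j,b_{-n})}=0.$$
   Context: $f\perp g$ means $g(u,v)f(z,w)-g(u,w)f(z,v)+g(v,w)f(z,u)=0$ for all $u,v,w,z$. Products over integer ranges follow the convention: $\prod_{j=k}^{m}A_j=A_k\cdots A_m$ if $m\ge k$; $=1$ if $m=k-1$; $=(A_{m+1}\cdots A_{k-1})^{-1}$ if $m\le k-2$. *)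

From HB Require Import structures.
From mathcomp Require Import all_boot all_order all_algebra.
From mathcomp Require Import complex.
From mathcomp Require Import reals.
Set Implicit Arguments. Unset Strict Implicit. Unset Printing Implicit Defensive.
Import Order.TTheory GRing.Theory Num.Theory.
Local Open Scope ring_scope.

Definition perp (T : Type) (F : pzRingType) (f g : T -> T -> F) : Prop :=
  forall u v w z : T,
    g u v * f z w - g u w * f z v + g v w * f z u = 0.

(* Product over an integer range with the paper's convention:
   prodZ A k m = A k * ... * A m        if m >= k,
               = 1                      if m = k - 1,
               = (A (m+1) * ... * A (k-1))^-1  if m <= k - 2. *)
Definition prodZ (F : unitRingType) (A : int -> F) (k m : int) : F :=
  let len := m - k + 1 in
  if (0 <= len)%R then \prod_(i < absz len) A (k + i%:Z)
  else (\prod_(i < absz len) A (m + 1 + i%:Z))^-1.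

Definition sumZ (F : pzRingType) (A : int -> F) (lo hi : int) : F :=
  \sum_(i < absz (hi - lo + 1) | (0 <= hi - lo + 1)%R) A (lo + i%:Z).

From HB Require Import structures.
From mathcomp Require Import all_boot all_order all_algebra.
From mathcomp Require Import complex.
From mathcomp Require Import reals.
From mathcomp Require Import zify ring.

Set Implicit Arguments.
Unset Strict Implicit.
Unset Printing Implicit Defensive.
Import Order.TTheory GRing.Theory Num.Theory.
Local Open Scope ring_scope.

(* Multiply the k-th summand by c = g(b_q, b_p), where [p, q] = [-n, m].
   The relation f ⊥ g at (b_k, b_q, b_p, a_k) writes the product as
   x_k - w_k, with x_k = u_k f(a_k,b_q) v_k g(b_k,b_p) and
   w_k = u_k g(b_k,b_q) v_k f(a_k,b_p), where u_k, v_k are the two ratios of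
   products.  Peeling one factor off each product gives x_k = w_(k-1), so the
   sum telescopes to x_p - w_q, and both ends vanish because
   g(b_p,b_p) = g(b_q,b_q) = 0. *)

Lemma perpE (T : Type) (F : pzRingType) (f g : T -> T -> F) (u v w z : T) :
  perp f g -> g v w * f z u = g u w * f z v - g u v * f z w.
Proof. by move=> /(_ u v w z) /eqP; rewrite addrC addr_eq0 opprB => /eqP. Qed.

Lemma alternating_of_antisymmetric (R : numDomainType) (T : Type) (g : T -> T -> R) :
  (forall x y, g x y = - g y x) -> forall x, g x x = 0.
Proof.
move=> g_anti x; apply/eqP; have /eqP := g_anti x x.
by rewrite -subr_eq0 opprK -mulr2n mulrn_eq0.
Qed.

Lemma sumZ_ord (V : pzRingType) (A : int -> V) (lo : int) (N : nat) :
  sumZ A lo (lo + N%:Z) = \sum_(i < N.+1) A (lo + i%:Z).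
Proof. by rewrite /sumZ (_ : lo + N%:Z - lo + 1 = N.+1%:Z) //; lia. Qed.

Lemma eq_sumZ (V : pzRingType) (A B : int -> V) (lo hi : int) :
  (forall k, lo <= k <= hi -> A k = B k) -> sumZ A lo hi = sumZ B lo hi.
Proof.
move=> eqAB; apply: eq_bigr => i /= nonempty.
by apply: eqAB; have := ltn_ord i; lia.
Qed.

Lemma mulr_sumZl (V : pzRingType) (A : int -> V) (lo hi : int) (c : V) :
  sumZ A lo hi * c = sumZ (fun k => A k * c) lo hi.
Proof. exact: mulr_suml. Qed.

Lemma sumZ_telescope (V : pzRingType) (X W : int -> V) (lo hi : int) :
  lo <= hi -> (forall k, lo < k <= hi -> X k = W (k - 1)) ->
  sumZ (fun k => X k - W k) lo hi = X lo - W hi.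
Proof.
move=> le_lo_hi; have -> : hi = lo + `|hi - lo|%N%:Z by lia.
rewrite sumZ_ord; elim: `|hi - lo|%N => [|N IH] XW.
  by rewrite big_ord_recr big_ord0 /= add0r addr0.
rewrite big_ord_recr IH => [|k hk]; last by apply: XW; lia.
rewrite /= (XW (lo + N.+1%:Z)); last lia.
by rewrite (_ : lo + N.+1%:Z - 1 = lo + N%:Z) ?addrA ?subrK //; lia.
Qed.

Lemma prodZ_recr (F : fieldType) (A : int -> F) (k j : int) :
  A j != 0 -> prodZ A k j = prodZ A k (j - 1) * A j.
Proof.
rewrite /prodZ (_ : j - 1 - k + 1 = j - k) ?subrK; last by ring.
have := subrK k j; move: (j - k) => d <-.
case: d => [N | [|N]] Aj.
- rewrite (_ : Posz N + 1 = N.+1%:Z) /=; last lia.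
  by rewrite big_ord_recr addrC.
- by rewrite (_ : -1 + 1 = 0) //= big_ord0 big_ord1 /= addr0 mulVf.
- rewrite (_ : Negz N.+1 + 1 = Negz N) /=; last lia.
  rewrite [in RHS]big_ord_recl invfM /= addr0 mulrAC mulVf // mul1r.
  by congr _^-1; apply: eq_bigr => i _; rewrite /bump /=; congr A; lia.
Qed.

Lemma prodZ_ratio_shift (F : fieldType) (A B : int -> F) (r k : int) :
  A (k - 1) != 0 -> B k != 0 ->
  prodZ A r (k - 1) / prodZ B r k * B k
  = prodZ A r (k - 1 - 1) / prodZ B r (k - 1) * A (k - 1).
Proof.
move=> Ak1 Bk; rewrite [prodZ B r k]prodZ_recr // [prodZ A r (k - 1)]prodZ_recr //.
by rewrite invfM mulrA mulfVK // mulrAC.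
Qed.

Section PerpSum.

Variables (F : fieldType) (T : Type) (f g : T -> T -> F) (a b : int -> T).
Hypotheses (fg_perp : perp f g) (g_alt : forall x, g x x = 0).
Variables (p q r s : int).
Hypothesis lt_pq : p < q.
Hypothesis nz : forall j, p <= j <= q ->
  [/\ f (a j) (b q) != 0, j != q -> g (b j) (b q) != 0,
      f (a j) (b p) != 0 & j != p -> g (b j) (b p) != 0].

Let fq j := f (a j) (b q).
Let gq j := g (b j) (b q).
Let fp j := f (a j) (b p).
Let gp j := g (b j) (b p).
Let u k := prodZ gq r (k - 1) / prodZ fq r k.
Let v k := prodZ fp s (k - 1) / prodZ gp s k.
Let w k := u k * gq k * (v k * fp k).

Lemma summand_perp_split k :
  f (a k) (b k) * u k * v k * g (b q) (b p) = u k * fq k * (v k * gp k) - w k.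
Proof.
have perp_k := perpE (b k) (b q) (b p) (a k) fg_perp.
transitivity (g (b q) (b p) * f (a k) (b k) * u k * v k); first ring.
by rewrite perp_k /w /fq /gq /fp /gp; ring.
Qed.

Lemma summand_shift k :
  p < k <= q -> u k * fq k * (v k * gp k) = w (k - 1).
Proof.
move=> k_in; have /nz[fqk _ _ gpk] : p <= k <= q by lia.
have /nz[_ gqk1 fpk1 _] : p <= k - 1 <= q by lia.
have gqk1' : gq (k - 1) != 0 by apply: gqk1; lia.
have gpk' : gp k != 0 by apply: gpk; lia.
by rewrite /w /u /v !prodZ_ratio_shift.
Qed.

Lemma perp_sumZ_eq0 :
  sumZ (fun k => f (a k) (b k)
                 * (prodZ (fun j => g (b j) (b q)) r (k - 1)
                    / prodZ (fun j => f (a j) (b q)) r k)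
                 * (prodZ (fun j => f (a j) (b p)) s (k - 1)
                    / prodZ (fun j => g (b j) (b p)) s k)) p q = 0.
Proof.
have /nz[_ _ _ gqp] : p <= q <= q by lia.
have gqp_neq0 : g (b q) (b p) != 0 by apply: gqp; rewrite gt_eqF.
apply: (mulIf gqp_neq0); rewrite mul0r mulr_sumZl.
rewrite (eq_sumZ (fun k _ => summand_perp_split k)) sumZ_telescope //.
- by rewrite /w /gq /gp !g_alt !(mulr0, mul0r) subrr.
- exact: ltW.
- by move=> k k_in; apply: summand_shift.
Qed.

End PerpSum.

Theorem theorem4p1 (R : realType) (T : Type) (f g : T -> T -> R[i])
  (a b : int -> T) (m n : nat) :
  perp f g ->
  (forall x y : T, g x y = - g y x) ->
  (1 <= n)%N ->
  (forall j : int, - (n%:Z) <= j <= m%:Z ->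
     [/\ f (a j) (b m%:Z) != 0,
         j != m%:Z -> g (b j) (b m%:Z) != 0,
         f (a j) (b (- (n%:Z))) != 0
       & j != - (n%:Z) -> g (b j) (b (- (n%:Z))) != 0]) ->
  sumZ (fun k : int =>
          f (a k) (b k)
          * (prodZ (fun j => g (b j) (b m%:Z)) m%:Z (k - 1)
             / prodZ (fun j => f (a j) (b m%:Z)) m%:Z k)
          * (prodZ (fun j => f (a j) (b (- (n%:Z)))) 1 (k - 1)
             / prodZ (fun j => g (b j) (b (- (n%:Z)))) 1 k))
       (- (n%:Z)) m%:Z = 0.
Proof.
move=> fg_perp g_anti n_gt0 nz.
apply: perp_sumZ_eq0 => //; first exact: alternating_of_antisymmetric.
lia.
Qed.
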